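(* Let $G$ be a simple loopless graph on $[L]$ and $p\ge1$. The map $\Phi_p:\Pi_{2p}(G)\to\mathcal{P}_{2p}(G)$ is surjective.
   Context: $\mathcal{T}(G)=\langle v\in[L]: uv=vu \text{ for } (u,v)\in E(G)\rangle$ is the trace monoid of $G$, $e$ the empty word. Words are adjacent, $w_1\leftrightarrow w_2$, if $w_1=vw_2$ or $w_2=vw_1$ for a letter $v$. $\mathcal{P}_{2p}(G)=\{w\in\mathcal{T}(G)^{2p}: e\leftrightarrow w_1\leftrightarrow\cdots\leftrightarrow w_{2p}=e\}$. $P_2(2p)$ is the set of pair partitions of $[2p]$; blocks $\{u_1,v_1\},\{u_2,v_2\}$ cross if $u_1<u_2<v_1<v_2$; $F_\pi$ is the graph on the blocks of $\pi$ with edges between crossing blocks. $\Pi_{2p}(G)=\{(\pi,\phi):\pi\in P_2(2p),\ \phi\in\operatorname{Hom}(F_\pi,G)\}$. Definition of $\Phi_p$ (it takes values in $\mathcal{P}_{2p}(G)$): (1) For $p=1$, if $\phi$ assigns label $i$ to the block $\{1,2\}$, $\Phi_1(\pi,\phi)=(i,e)$. (2) Given $\Phi_p$ and $(\pi,\phi)\in\Pi_{2(p+1)}(G)$, let $r$ be the smallest index that is the larger element of its block, $U=\{s,r\}\in\pi$ with $s<r$, $i_s=\phi(U)$, $\sigma=\pi\setminus\{U\}$, $\psi=\phi|_\sigma$. Identify $P_2([2(p+1)]\setminus\{s,r\})$ with $P_2(2p)$ via the order-preserving bijection, write $u=\Phi_p(\sigma,\psi)=(u_k)_{k\in[2(p+1)]\setminus\{s,r\}}$,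 and let $u_{k^-}$ be $u_j$ for the largest $j<k$, $j\notin\{s,r\}$, or $e$ if none exists. Then $\Phi_{p+1}(\pi,\phi)_k=u_k$ for $k<s$; $i_su_{s^-}$ for $k=s$; $i_su_k$ for $s<k<r$; $u_{r^-}$ for $k=r$; $u_k$ for $k>r$. *)

From mathcomp Require Import all_boot.
From Stdlib Require Import Relations.
Set Implicit Arguments. Unset Strict Implicit. Unset Printing Implicit Defensive.

(* The graph G on [L] is a relation on 'I_L
   (vertex i stands for i+1).  Traces of T(G) are represented by words
   (seq 'I_L) modulo the congruence generated by commuting adjacent letters
   joined by an edge of G. *)

Section Defs.
Variables (L : nat) (G : rel 'I_L).

Definition word := seq 'I_L.

Definition swap_step (w1 w2 : word) : Prop :=
  exists a b (x y : 'I_L), G x y /\ w1 = a ++ x :: y :: b /\ w2 = a ++ y :: x :: b.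

Definition traceeq : word -> word -> Prop :=
  clos_refl_sym_trans word swap_step.

Definition tadj (w1 w2 : word) : Prop :=
  exists v : 'I_L, traceeq w1 (v :: w2) \/ traceeq w2 (v :: w1).

(* w = (w_1,...,w_{2p}) (as the list [w_1;...;w_{2p}]) belongs to P_{2p}(G):
   e <-> w_1 <-> ... <-> w_{2p} = e *)
Definition in_P (p : nat) (w : seq word) : Prop :=
  size w = p.*2 /\
  (forall k, k < p.*2 -> tadj (nth [::] ([::] :: w) k) (nth [::] w k)) /\
  traceeq (last [::] w) [::].

(* A labelled pair partition (pi, phi) is a list of blocks ((s, r), i):
   {s, r} is a block of pi with s < r and i = phi({s,r}) in [L]. *)
Definition block := ((nat * nat) * 'I_L)%type.

Definition bpos (bl : seq block) : seq nat :=
  flatten [seq [:: b.1.1; b.1.2] | b <- bl].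

Definition crossb (b1 b2 : block) : bool :=
  [&& b1.1.1 < b2.1.1, b2.1.1 < b1.1.2 & b1.1.2 < b2.1.2].

(* (pi, phi) in Pi_{2p}(G): pi is a pair partition of [2p] = {1,...,2p}
   and phi is a graph homomorphism F_pi -> G. *)
Definition in_Pi (p : nat) (bl : seq block) : Prop :=
  (forall b, b \in bl -> b.1.1 < b.1.2) /\
  perm_eq (bpos bl) (iota 1 p.*2) /\
  (forall b1 b2, b1 \in bl -> b2 \in bl -> crossb b1 b2 -> G b1.2 b2.2).

(* The recursive map Phi, on labelled pair partitions of an arbitrary finite
   set of positions (this realises the order-preserving identification in the
   paper).  The fuel n is the number of blocks. *)
Fixpoint PhiF (n : nat) (bl : seq block) : nat -> word :=
  match n with
  | 0 => fun _ => [::]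
  | n'.+1 =>
    match bl with
    | [::] => fun _ => [::]
    | [:: b] => fun k => if k == b.1.1 then [:: b.2] else [::]
    | b0 :: _ =>
      (* U = {s, r}: r is the smallest index that is the larger element of its block *)
      let U := nth b0 bl (find (fun b => all (fun c => b.1.2 <= c.1.2) bl) bl) in
      let s := U.1.1 in let r := U.1.2 in let i := U.2 in
      let sigma := rem U bl in
      let u := PhiF n' sigma in
      let prev k := let js := [seq j <- bpos sigma | j < k] in
                    if js is [::] then [::] else u (\max_(j <- js) j) in
      fun k => if k < s then u k
               else if k == s then i :: prev s
               else if k < r then i :: u k
               else if k == r then prev r
               else u k
    end
  end.

Definition Phi (p : nat) (bl : seq block) : seq word :=
  [seq PhiF (size bl) bl k | k <- iota 1 p.*2].

End Defs.

(* Invert the recursion defining Phi.  Index the path by an arbitrary finite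
   set of positions and let r be the first step at which the word shrinks,
   w_{r-1} = v w_r.  Following the letter v backwards (Levi's lemma) gives the
   step s < r that wrote it, w_s = v w_{s-1}, and every letter written at a
   step strictly between s and r commutes with v.  Deleting v from these words
   and dropping the positions s and r leaves a shorter path, which by induction
   is the image of some labelled pair partition; adding the block {s, r}
   labelled v gives a preimage of the original path.  The new block is the one
   with the smallest closer because all steps before r grow, and a block
   crossing it opens strictly between s and r, hence carries a label commuting
   with v. *)

From Stdlib Require Import Relations.
From mathcomp Require Import all_boot.
Set Implicit Arguments. Unset Strict Implicit. Unset Printing Implicit Defensive.

Section PhiInverse.
Variables (L : nat) (G : rel 'I_L).
Hypotheses (Gsym : symmetric G) (Girr : irreflexive G).
Local Notation teq := (traceeq G).

Lemma teq_refl x : teq x x. Proof. exact: rst_refl. Qed.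
Lemma teq_sym x y : teq x y -> teq y x. Proof. exact: rst_sym. Qed.
Lemma teq_trans x y z : teq x y -> teq y z -> teq x z. Proof. exact: rst_trans. Qed.

Lemma swap_step_sym x y : swap_step G x y -> swap_step G y x.
Proof. by case=> a [b [u [v [Guv [-> ->]]]]]; exists a, b, v, u; rewrite Gsym. Qed.

Lemma teq_cons a x y : teq x y -> teq (a :: x) (a :: y).
Proof.
elim=> {x y} [x y [c [d [u [v [Guv [-> ->]]]]]]|x|x y _|x y z _ IHxy _ IHyz].
- by apply: rst_step; exists (a :: c), d, u, v.
- exact: teq_refl.
- exact: teq_sym.
- exact: teq_trans IHxy IHyz.
Qed.

Lemma teq_swap a b x : G a b -> teq (a :: b :: x) (b :: a :: x).
Proof. by move=> Gab; apply: rst_step; exists [::], x, a, b. Qed.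

Lemma teq_perm x y : teq x y -> perm_eq x y.
Proof.
elim=> {x y} [x y [c [d [u [v [_ [-> ->]]]]]]|x|x y _|x y z _ IHxy _ IHyz].
- by rewrite perm_cat2l (perm_catCA [:: u] [:: v] d).
- exact: perm_refl.
- by rewrite perm_sym.
- exact: perm_trans IHxy IHyz.
Qed.

Lemma teq_size x y : teq x y -> size x = size y.
Proof. by move/teq_perm/perm_size. Qed.

Lemma teq_cons_inj (a b : 'I_L) z : teq (a :: z) (b :: z) -> a = b.
Proof.
move/teq_perm/permP/(_ (pred1 a)) => /=; rewrite eqxx.
by case: eqP => // _ /eqP; rewrite eqn_add2r.
Qed.

Lemma teq_commute v A B : all (G v) A -> teq (A ++ v :: B) (v :: A ++ B).
Proof.
elim: A => [|a A IH] /=; first by move=> _; exact: teq_refl.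
case/andP=> Gva /IH h; apply: teq_trans (teq_cons a h) _.
by apply: teq_swap; rewrite Gsym.
Qed.

Definition letter_split v y x :=
  exists A B, [/\ x = A ++ v :: B, all (G v) A & teq (A ++ B) y].

Lemma letter_split_swap v y x1 x2 :
  swap_step G x1 x2 -> letter_split v y x1 -> letter_split v y x2.
Proof.
case=> c [d [x [z [Gxz [-> ->]]]]] [A [B [eqX GA eqY]]].
elim: c A y eqX GA eqY => [|c0 c IH] [|a A] y /=.
- by case=> <- <- _ eqY; exists [:: z], d; rewrite /= Gxz.
- case=> <- {a}; case: A => [|a A] /=.
    by case=> <- <-; case/andP=> Gvx _ eqY; exists [::], (x :: d).
  case=> <- ->; case/and3P=> Gvx Gvz GA eqY; exists [:: z, x & A], B.
  split=> //=; first by rewrite Gvx Gvz GA.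
  by apply: teq_trans eqY; apply: teq_swap; rewrite Gsym.
- case=> <- <- _ eqY; exists [::], (c ++ [:: z, x & d]); split=> //.
  by apply: teq_trans eqY; apply/rst_step/swap_step_sym; exists c, d, x, z.
- case=> <- eqX; case/andP=> Gva GA eqY.
  have [A2 [B2 [-> GA2 eqY2]]] := IH A _ eqX GA (teq_refl _).
  exists (c0 :: A2), B2; split; rewrite //= ?Gva //.
  by apply: teq_trans eqY; apply: teq_cons.
Qed.

(* Levi's lemma, for a single letter. *)
Lemma teq_letter_split v y x : teq (v :: y) x -> letter_split v y x.
Proof.
have split_teq x1 x2 : teq x1 x2 -> letter_split v y x1 <-> letter_split v y x2.
  elim=> {x1 x2} [x1 x2 st|x1|x1 x2 _ IH|x1 x2 x3 _ IH12 _ IH23].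
  - by split; apply: letter_split_swap; last exact: swap_step_sym.
  - by [].
  - by split; move/IH.
  - by split; [move/IH12/IH23|move/IH23/IH12].
by move/split_teq=> [+ _]; apply; exists [::], y; split=> //; exact: teq_refl.
Qed.

Lemma teq_cons_cancel v x y : teq (v :: x) (v :: y) -> teq x y.
Proof.
move/teq_sym/teq_letter_split=> [[|a A] [B []]] /=; first by case=> ->.
by case=> -> _; rewrite Girr.
Qed.

Lemma teq_cons_cases a z v y : teq (a :: z) (v :: y) ->
  (a = v /\ teq z y) \/ (G v a /\ exists y', teq z (v :: y')).
Proof.
move/teq_sym/teq_letter_split=> [[|a' A] [B []]] /=; first by case=> -> -> _; left.
case=> -> -> /andP [Gva GA] _; right; split=> //.
by exists (A ++ B); apply: teq_commute.
Qed.

Lemma teq_cons_rem v x y : teq x (v :: y) -> teq x (v :: rem v x).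
Proof.
move/teq_sym/teq_letter_split=> [A [B [-> GA _]]].
suff -> : rem v (A ++ v :: B) = A ++ B by exact: teq_commute.
elim: A GA => [|a A IH] /=; first by rewrite eqxx.
case/andP=> Gva /IH ->; case: eqP => // eav.
by move: Gva; rewrite eav Girr.
Qed.

Lemma tadj_teq_l x x' y : teq x x' -> tadj G x y -> tadj G x' y.
Proof.
move=> e [a [h|h]]; exists a; first by left; apply: teq_trans (teq_sym e) h.
by right; apply: teq_trans h (teq_cons a e).
Qed.

Lemma tadj_grow x y : tadj G x y -> size x <= size y -> exists a, teq y (a :: x).
Proof.
move=> [a [h|h]] hs; last by exists a.
by move: hs; rewrite (teq_size h) /= ltnn.
Qed.

Lemma tadj_shrink x y : tadj G x y -> size y < size x -> exists a, teq x (a :: y).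
Proof.
move=> [a [h|h]] hs; first by exists a.
by move: hs; rewrite (teq_size h) /= ltnNge leqnSn.
Qed.

Lemma bigmax_mem (s : seq nat) : s != [::] -> \max_(j <- s) j \in s.
Proof.
elim: s => // j [|j' s] IH _; first by rewrite big_seq1 mem_seq1.
rewrite big_cons inE; have := IH isT; rewrite /maxn.
by case: ltnP => _ jmax; rewrite ?jmax ?orbT ?eqxx.
Qed.

Definition prev_word (P : seq nat) (W : nat -> word L) (k : nat) : word L :=
  let js := [seq j <- P | j < k] in if js is [::] then [::] else W (\max_(j <- js) j).

Variant prev_word_spec (P : seq nat) (W : nat -> word L) (k : nat) : word L -> Prop :=
 | PrevNone : (forall j, j \in P -> k <= j) -> prev_word_spec P W k [::]
 | PrevSome m : m \in P -> m < k -> (forall j, j \in P -> j < k -> j <= m) ->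
     prev_word_spec P W k (W m).

Lemma prev_wordP P W k : prev_word_spec P W k (prev_word P W k).
Proof.
rewrite /prev_word; have := @bigmax_mem [seq j <- P | j < k].
case E: [seq j <- P | j < k] => [|j0 js] max_in.
  apply: PrevNone => j jP; rewrite leqNgt; apply/negP => jk.
  by have := mem_filter (fun j => j < k) j P; rewrite E jk jP.
have /(_ isT) := max_in; rewrite -E mem_filter => /andP [mk mP].
apply: PrevSome => // j jP jk.
by apply: (leq_bigmax_seq j) => //; rewrite mem_filter jk jP.
Qed.

Lemma prev_word_none P W k : (forall j, j \in P -> k <= j) -> prev_word P W k = [::].
Proof.
move=> H; case: prev_wordP => // m mP mk _.
by have := H m mP; rewrite leqNgt mk.
Qed.

Lemma prev_word_max P W k m : m \in P -> m < k ->
  (forall j, j \in P -> j < k -> j <= m) -> prev_word P W k = W m.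
Proof.
move=> mP mk H; case: prev_wordP => [H2|m' m'P m'k H2].
  by have := H2 m mP; rewrite leqNgt mk.
by congr W; apply/eqP; rewrite eqn_leq H // H2.
Qed.

Lemma eq_prev_word P1 P2 W k : P1 =i P2 -> prev_word P1 W k = prev_word P2 W k.
Proof.
move=> e; case: (prev_wordP P2 W k) => [H|m mP mk H].
  by apply: prev_word_none => j; rewrite e; apply: H.
by apply: prev_word_max; rewrite ?e // => j; rewrite e; apply: H.
Qed.

Lemma eq_prev_word_bound P W k k' : {in P, forall j, (j < k) = (j < k')} ->
  prev_word P W k = prev_word P W k'.
Proof. by move=> H; rewrite /prev_word (eq_in_filter H). Qed.

Lemma teq_prev_word P U W k : (forall j, j \in P -> j < k -> teq (U j) (W j)) ->
  teq (prev_word P U k) (prev_word P W k).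
Proof.
move=> H; case: (prev_wordP P W k) => [H2|m mP mk H2].
  by rewrite prev_word_none //; exact: teq_refl.
by rewrite (prev_word_max U mP mk H2); apply: H.
Qed.

(* The path condition of [in_P] for an arbitrary set of positions [P]; the
   last word is [prev_word P W m] for any [m] beyond [P]. *)
Definition trace_path (P : seq nat) (W : nat -> word L) :=
  (forall k, k \in P -> tadj G (prev_word P W k) (W k)) /\
  (forall m, (forall j, j \in P -> j < m) -> teq (prev_word P W m) [::]).

Lemma count_ltnS (P : seq nat) m :
  count (fun j => j < m.+1) P = count (fun j => j < m) P + count_mem m P.
Proof.
elim: P => //= j P ->; rewrite ltnS leq_eqVlt.
by case: (ltngtP j m) => //= _; rewrite add0n addnCA.
Qed.

Lemma size_prev_word_grow P W : uniq P ->
  (forall k, k \in P -> size (W k) = (size (prev_word P W k)).+1) ->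
  forall m, size (prev_word P W m) = count (fun j => j < m) P.
Proof.
move=> uP grow; elim=> [|m IH]; first by rewrite prev_word_none // count_pred0.
rewrite count_ltnS count_uniq_mem //; case: (boolP (m \in P)) => mP.
  by rewrite (@prev_word_max _ _ _ m) // ?grow ?IH ?addn1 // => j _; rewrite ltnS.
rewrite addn0 -IH; congr size; apply: eq_prev_word_bound => j jP.
by rewrite ltnS leq_eqVlt; case: eqP => // ejm; rewrite -ejm jP in mP.
Qed.

Lemma exists_shrink_step P W : uniq P -> P != [::] -> trace_path P W ->
  exists r, (r \in P) && (size (W r) < size (prev_word P W r)).
Proof.
move=> uP P0 [adj last_nil].
have [/hasP [r rP shrink]|/hasPn grow] :=
  boolP (has (fun r => size (W r) < size (prev_word P W r)) P).
  by exists r; rewrite rP shrink.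
have grow1 k : k \in P -> size (W k) = (size (prev_word P W k)).+1.
  move=> kP; have [|a /teq_size ->] // := tadj_grow (adj k kP).
  by rewrite leqNgt grow.
(* Otherwise every step grows, so the last word has length [size P > 0]. *)
pose M := (\max_(j <- P) j).+1.
have below_M j : j \in P -> j < M by move=> jP; rewrite ltnS leq_bigmax_seq.
have := size_prev_word_grow uP grow1 M.
rewrite (teq_size (last_nil M below_M)) (eq_in_count (a2 := predT)) ?count_predT //.
by move/esym/size0nil/eqP; rewrite (negbTE P0).
Qed.

Lemma find_opener P W v q : q \in P ->
  (forall k, k \in P -> k <= q -> exists a, teq (W k) (a :: prev_word P W k)) ->
  forall y, teq (W q) (v :: y) ->
  exists s, [/\ s \in P, s <= q, teq (W s) (v :: prev_word P W s) &
    forall k, k \in P -> s < k -> k <= q ->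
      (exists a, G v a /\ teq (W k) (a :: prev_word P W k)) /\
      (exists y', teq (W k) (v :: y'))].
Proof.
elim/ltn_ind: q => q IH qP grow y Wq.
have [a Wa] := grow q qP (leqnn q).
case/teq_cons_cases: (teq_trans (teq_sym Wa) Wq) => [[eav _]|[Gva [y' eq_y']]].
  exists q; split=> //; first by rewrite -eav.
  by move=> k _ qk kq; have := leq_trans qk kq; rewrite ltnn.
move: eq_y' Wa; case: (prev_wordP P W q) => [_ /teq_size/eqP //|m mP mq mmax Wm Wa].
have [|s [sP sm Ws later]] := IH m mq mP _ y' Wm.
  by move=> k kP km; apply: grow => //; apply: leq_trans km (ltnW mq).
exists s; split=> //; first exact: leq_trans sm (ltnW mq).
move=> k kP sk kq; case: (leqP k m) => km; first exact: later.
have -> : k = q.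
  apply/eqP; rewrite eqn_leq kq leqNgt; apply/negP => kq'.
  by have := mmax k kP kq'; rewrite leqNgt km.
rewrite (prev_word_max W mP mq mmax); split; first by exists a.
exists (a :: y'); apply: teq_trans Wa _.
by apply: teq_trans (teq_cons a Wm) _; apply: teq_swap; rewrite Gsym.
Qed.

Lemma bpos_mem (bl : seq (block L)) b :
  b \in bl -> (b.1.1 \in bpos bl) && (b.1.2 \in bpos bl).
Proof.
elim: bl => // c bl IH; rewrite inE => /orP [/eqP ->|/IH /andP [h1 h2]] /=.
  by rewrite !inE !eqxx orbT.
by rewrite !inE h1 h2 !orbT.
Qed.

(* [k \in bpos (U :: sg)] only matters for [sg = [::]], where [PhiF] is Phi_1. *)
Lemma PhiF_cons n (U : block L) sg k :
  all (fun c => U.1.2 <= c.1.2) sg -> k \in bpos (U :: sg) ->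
  PhiF n.+1 (U :: sg) k =
  if k < U.1.1 then PhiF n sg k
  else if k == U.1.1 then U.2 :: prev_word (bpos sg) (PhiF n sg) U.1.1
  else if k < U.1.2 then U.2 :: PhiF n sg k
  else if k == U.1.2 then prev_word (bpos sg) (PhiF n sg) U.1.2
  else PhiF n sg k.
Proof.
case: sg => [_|c sg /= minU _]; last by rewrite /= leqnn /= minU /= eqxx.
have PhiF_nil j : PhiF n [::] j = [::] by case: n.
rewrite PhiF_nil !inE /= => /orP [] /eqP ->; first by rewrite ltnn eqxx.
by case: ltngtP; rewrite ?ltnn ?eqxx.
Qed.

(* Besides [Phi], a realization remembers that every opener is a growing
   step writing the label of its block and every closer a shrinking step. *)
Record realizes n P W (bl : seq (block L)) : Prop := Realizes {
  realizes_size : size bl = n;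
  realizes_ordered : forall b, b \in bl -> b.1.1 < b.1.2;
  realizes_bpos : perm_eq (bpos bl) P;
  realizes_cross :
    forall b1 b2, b1 \in bl -> b2 \in bl -> crossb b1 b2 -> G b1.2 b2.2;
  realizes_PhiF : forall k, k \in P -> teq (PhiF n bl k) (W k);
  realizes_opener :
    forall b, b \in bl -> teq (W b.1.1) (b.2 :: prev_word P W b.1.1);
  realizes_closer :
    forall b, b \in bl -> size (W b.1.2) < size (prev_word P W b.1.2)
}.

Section RemovePair.
Variables (P : seq nat) (W : nat -> word L) (s r q : nat) (v : 'I_L).
Hypotheses (Puniq : uniq P) (sP : s \in P) (rP : r \in P) (qP : q \in P).
Hypotheses (sq : s <= q) (qr : q < r) (qmax : forall j, j \in P -> j < r -> j <= q).
Hypothesis grow : forall k, k \in P -> k < r -> exists a, teq (W k) (a :: prev_word P W k).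
Hypotheses (Wq : teq (W q) (v :: W r)) (Ws : teq (W s) (v :: prev_word P W s)).
Hypothesis between : forall k, k \in P -> s < k -> k <= q ->
  (exists a, G v a /\ teq (W k) (a :: prev_word P W k)) /\
  (exists y, teq (W k) (v :: y)).

Definition pos_rm := [seq k <- P | (k != s) && (k != r)].
Definition word_rm k := if (s < k) && (k < r) then rem v (W k) else W k.

Lemma ltn_s_r : s < r. Proof. exact: leq_ltn_trans sq qr. Qed.

Lemma mem_pos_rm k : (k \in pos_rm) = [&& k \in P, k != s & k != r].
Proof. by rewrite mem_filter andbC. Qed.

Lemma word_rm_le k : k <= s -> word_rm k = W k.
Proof. by move=> ks; rewrite /word_rm ltnNge ks. Qed.

Lemma word_rm_ge k : r <= k -> word_rm k = W k.
Proof. by move=> rk; rewrite /word_rm (ltnNge k) rk andbF. Qed.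

Lemma word_rm_mid k : k \in P -> s < k -> k < r -> teq (W k) (v :: word_rm k).
Proof.
move=> kP sk kr; rewrite /word_rm sk kr.
by have [_ [y /teq_cons_rem]] := between kP sk (qmax kP kr).
Qed.

Lemma prev_rm_max k m : m \in P -> m != s -> m != r -> m < k ->
  (forall j, j \in P -> j < k -> j <= m) -> prev_word pos_rm word_rm k = word_rm m.
Proof.
move=> mP ms mr mk H; apply: prev_word_max; rewrite ?mem_pos_rm ?mP ?ms ?mr //.
by move=> j; rewrite mem_pos_rm => /and3P [jP _ _]; apply: H.
Qed.

Lemma prev_rm_skip k t : (t == s) || (t == r) -> t < k ->
  (forall j, j \in P -> j < k -> j <= t) ->
  prev_word pos_rm word_rm k = prev_word pos_rm word_rm t.
Proof.
move=> tsr tk H; apply: eq_prev_word_bound => j; rewrite mem_pos_rm => /and3P [jP js jr].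
have jt : j != t by case/orP: tsr => /eqP ->.
case: (ltngtP j t) jt => // [jt _|tj _]; first exact: ltn_trans jt tk.
by apply/negbTE; rewrite -leqNgt; case: (ltnP j k) => // /(H j jP); rewrite leqNgt tj.
Qed.

Lemma prev_rm_le k : k <= s -> prev_word pos_rm word_rm k = prev_word P W k.
Proof.
move=> ks; case: (prev_wordP P W k) => [H|m mP mk H].
  by apply: prev_word_none => j; rewrite mem_pos_rm => /and3P [jP _ _]; apply: H.
have ms : m < s := leq_trans mk ks.
rewrite (prev_rm_max mP _ _ mk H) ?word_rm_le ?(ltnW ms) //.
  by rewrite neq_ltn ms.
by rewrite neq_ltn (ltn_trans ms ltn_s_r).
Qed.

Lemma word_rm_grow k : k \in P -> s < k -> k < r ->
  exists a, [/\ G v a, teq (W k) (a :: prev_word P W k) &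
                teq (word_rm k) (a :: prev_word pos_rm word_rm k)].
Proof.
move=> kP sk kr; have [[a [Gva Wa]] _] := between kP sk (qmax kP kr).
exists a; split=> //; move: Wa.
case: (prev_wordP P W k) => [H|m mP mk H Wa]; first by have := H s sP; rewrite leqNgt sk.
have Gav : G a v by rewrite Gsym.
apply: (@teq_cons_cancel v); apply: teq_trans (teq_sym (word_rm_mid kP sk kr)) _.
have /orP [/eqP esm|sm] : (s == m) || (s < m) by rewrite -leq_eqVlt H.
  rewrite -{}esm in Wa H; rewrite (prev_rm_skip (t := s)) ?eqxx // prev_rm_le //.
  by apply: teq_trans Wa _; apply: teq_trans (teq_cons a Ws) _; exact: teq_swap.
have mr := ltn_trans mk kr.
rewrite (prev_rm_max mP _ _ mk H) ?neq_ltn ?sm ?mr ?orbT //.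
apply: teq_trans Wa _; apply: teq_trans (teq_cons a (word_rm_mid mP sm mr)) _.
exact: teq_swap.
Qed.

Lemma prev_rm_r : teq (prev_word pos_rm word_rm r) (W r).
Proof.
apply: (@teq_cons_cancel v); apply: teq_trans _ Wq; apply: teq_sym.
have /orP [/eqP esq|sq'] : (s == q) || (s < q) by rewrite -leq_eqVlt.
  rewrite -esq (prev_rm_skip (t := s)) ?eqxx ?ltn_s_r ?prev_rm_le //.
  by rewrite esq.
rewrite (prev_rm_max qP _ _ qr qmax) ?neq_ltn ?sq' ?qr ?orbT //.
exact: word_rm_mid.
Qed.

Lemma prev_rm_after_r k : r < k -> teq (prev_word pos_rm word_rm k) (prev_word P W k).
Proof.
move=> rk; case: (prev_wordP P W k) => [H|m mP mk H]; first by have := H r rP; rewrite leqNgt rk.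
have /orP [/eqP erm|rm] : (r == m) || (r < m) by rewrite -leq_eqVlt H.
  by rewrite (prev_rm_skip (t := r)) ?eqxx ?orbT ?erm //; rewrite -erm; exact: prev_rm_r.
rewrite (prev_rm_max mP _ _ mk H) ?word_rm_ge ?(ltnW rm) ?neq_ltn ?rm ?orbT //.
  exact: teq_refl.
by rewrite (ltn_trans ltn_s_r rm) orbT.
Qed.

Lemma perm_pos_rm : perm_eq P (s :: r :: pos_rm).
Proof.
apply: uniq_perm => //.
  by rewrite /= !inE !mem_pos_rm !eqxx (ltn_eqF ltn_s_r) !andbF filter_uniq.
move=> k; rewrite !inE mem_pos_rm.
by case: (k =P s) => [->|_] /=; [rewrite sP | case: (k =P r) => [->|] /=; rewrite ?rP ?andbT].
Qed.

Lemma trace_path_rm : trace_path P W -> trace_path pos_rm word_rm.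
Proof.
case=> adj last_nil; split.
  move=> k; rewrite mem_pos_rm => /and3P [kP ks kr].
  case: (ltngtP k s) => [kls|skl|eks]; last by rewrite eks eqxx in ks.
    by rewrite prev_rm_le ?word_rm_le ?(ltnW kls) //; exact: adj.
  case: (ltngtP k r) => [klr|rkl|ekr]; last by rewrite ekr eqxx in kr.
    by have [a [_ _ h]] := word_rm_grow kP skl klr; exists a; right.
  rewrite word_rm_ge ?(ltnW rkl) //.
  exact: tadj_teq_l (teq_sym (prev_rm_after_r rkl)) (adj k kP).
move=> m Hm; rewrite (@eq_prev_word_bound _ _ m (maxn m r.+1)); last first.
  by move=> j jP; rewrite leq_max Hm.
apply: teq_trans (prev_rm_after_r _) _; first by rewrite leq_max leqnn orbT.
apply: last_nil => j jP; rewrite leq_max.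
case: (j =P s) => [->|js]; first by rewrite ltnS (ltnW ltn_s_r) orbT.
case: (j =P r) => [->|jr]; first by rewrite ltnS leqnn orbT.
by rewrite Hm // mem_pos_rm jP /=; apply/andP; split; apply/eqP.
Qed.

Lemma size_word_rm_grow k : k \in pos_rm -> k < r ->
  size (word_rm k) = (size (prev_word pos_rm word_rm k)).+1.
Proof.
rewrite mem_pos_rm => /and3P [kP ks kr] klr.
case: (ltngtP k s) => [kls|skl|eks]; last by rewrite eks eqxx in ks.
  rewrite prev_rm_le ?word_rm_le ?(ltnW kls) //.
  by have [a /teq_size ->] := grow kP klr.
by have [a [_ _ /teq_size ->]] := word_rm_grow kP skl klr.
Qed.

Hypothesis Wr : size (W r) < size (prev_word P W r).
Variables (n : nat) (sg : seq (block L)).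
Hypothesis sg_ok : realizes n pos_rm word_rm sg.

Let U : block L := ((s, r), v).

Lemma mem_bpos_rm b : b \in sg -> (b.1.1 \in pos_rm) && (b.1.2 \in pos_rm).
Proof. by move/bpos_mem; rewrite !(perm_mem (realizes_bpos sg_ok)). Qed.

Lemma closer_gt_r b : b \in sg -> r < b.1.2.
Proof.
move=> bsg; have /andP [_ b2] := mem_bpos_rm bsg.
have := b2; rewrite mem_pos_rm => /and3P [_ _ b2r].
rewrite ltn_neqAle eq_sym b2r leqNgt /=; apply/negP => b2lr.
by have := realizes_closer sg_ok bsg; rewrite size_word_rm_grow // ltnNge leqnSn.
Qed.

Lemma opener_between b : b \in sg -> s < b.1.1 -> b.1.1 < r ->
  G v b.2 /\ teq (W b.1.1) (b.2 :: prev_word P W b.1.1).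
Proof.
move=> bsg sb br; have /andP [b1 _] := mem_bpos_rm bsg.
move: b1; rewrite mem_pos_rm => /and3P [bP _ _].
have [a [Gva Wa Wa']] := word_rm_grow bP sb br.
suff -> : b.2 = a by [].
apply: (@teq_cons_inj _ _ (prev_word pos_rm word_rm b.1.1)).
exact: teq_trans (teq_sym (realizes_opener sg_ok bsg)) Wa'.
Qed.

Lemma bpos_cons_perm : perm_eq (bpos (U :: sg)) P.
Proof.
apply: (@perm_trans _ (s :: r :: pos_rm)); last by rewrite perm_sym perm_pos_rm.
by rewrite /= !perm_cons; exact: realizes_bpos sg_ok.
Qed.

Lemma cross_cons b1 b2 : b1 \in U :: sg -> b2 \in U :: sg -> crossb b1 b2 -> G b1.2 b2.2.
Proof.
rewrite !inE => /orP [/eqP ->|b1sg] /orP [/eqP ->|b2sg].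
- by rewrite /crossb /= ltnn.
- by rewrite /crossb /= => /and3P [sb bsr _]; case: (opener_between b2sg sb bsr).
- by rewrite /crossb /= => /and3P [_ _ b1r]; have := closer_gt_r b1sg; rewrite ltnNge (ltnW b1r).
- move=> cr; exact: (realizes_cross sg_ok b1sg b2sg cr).
Qed.

Lemma PhiF_cons_teq k : k \in P -> teq (PhiF n.+1 (U :: sg) k) (W k).
Proof.
move=> kP; have Phi_rm j : j \in P -> j != s -> j != r -> teq (PhiF n sg j) (word_rm j).
  by move=> jP js jr; apply: (realizes_PhiF sg_ok); rewrite mem_pos_rm jP js jr.
have prev_Phi j : teq (prev_word (bpos sg) (PhiF n sg) j) (prev_word pos_rm word_rm j).
  rewrite (eq_prev_word _ _ (perm_mem (realizes_bpos sg_ok))).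
  by apply: teq_prev_word => i; rewrite mem_pos_rm => /and3P [iP i_s i_r] _; exact: Phi_rm.
have min_r : all (fun c => U.1.2 <= c.1.2) sg.
  by apply/allP => b /closer_gt_r /ltnW.
rewrite PhiF_cons //= ?(perm_mem bpos_cons_perm) //.
case: (ltngtP k s) => [ks|sk|->].
- have kr := ltn_trans ks ltn_s_r.
  by rewrite -(word_rm_le (ltnW ks)); apply: Phi_rm; rewrite ?neq_ltn ?ks ?kr.
- case: (ltngtP k r) => [kr|rk|->].
  + have k_rm : teq (PhiF n sg k) (word_rm k).
      by apply: Phi_rm; rewrite ?neq_ltn ?sk ?kr ?orbT.
    exact: teq_trans (teq_cons v k_rm) (teq_sym (word_rm_mid kP sk kr)).
  + have sk' := ltn_trans ltn_s_r rk.
    by rewrite -(word_rm_ge (ltnW rk)); apply: Phi_rm; rewrite ?neq_ltn ?rk ?sk' ?orbT.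
  + exact: teq_trans (prev_Phi r) prev_rm_r.
- apply: teq_sym; apply: teq_trans Ws (teq_cons v _).
  by rewrite -(prev_rm_le (leqnn s)); exact: teq_sym (prev_Phi s).
Qed.

Lemma opener_cons b : b \in U :: sg -> teq (W b.1.1) (b.2 :: prev_word P W b.1.1).
Proof.
rewrite inE => /orP [/eqP -> //|bsg].
have /andP [b1 _] := mem_bpos_rm bsg; move: b1; rewrite mem_pos_rm => /and3P [_ bs br].
have := realizes_opener sg_ok bsg.
case: (ltngtP b.1.1 s) => [bls|sb|ebs]; last by rewrite ebs eqxx in bs.
  by rewrite word_rm_le ?prev_rm_le ?(ltnW bls).
case: (ltngtP b.1.1 r) => [blr _|rb|ebr]; last by rewrite ebr eqxx in br.
  by case: (opener_between bsg sb blr).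
rewrite word_rm_ge ?(ltnW rb) //.
by move/teq_trans; apply; apply: teq_cons; exact: prev_rm_after_r.
Qed.

Lemma closer_cons b : b \in U :: sg -> size (W b.1.2) < size (prev_word P W b.1.2).
Proof.
rewrite inE => /orP [/eqP -> //|bsg]; have rb := closer_gt_r bsg.
have := realizes_closer sg_ok bsg.
rewrite word_rm_ge ?(ltnW rb) //.
by rewrite (teq_size (prev_rm_after_r rb)).
Qed.

Lemma realizes_cons : realizes n.+1 P W (U :: sg).
Proof.
split.
- by rewrite /= (realizes_size sg_ok).
- by move=> b; rewrite inE => /orP [/eqP -> /=|/(realizes_ordered sg_ok)]; first exact: ltn_s_r.
- exact: bpos_cons_perm.
- exact: cross_cons.
- exact: PhiF_cons_teq.
- exact: opener_cons.
- exact: closer_cons.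
Qed.

End RemovePair.

Lemma realizes_exists n P W : uniq P -> size P = n.*2 -> trace_path P W ->
  exists bl, realizes n P W bl.
Proof.
elim: n P W => [|n IH] P W uP szP path.
  by move/size0nil: szP => ->; exists [::]; split.
have P0 : P != [::] by rewrite -size_eq0 szP.
case: (ex_minnP (exists_shrink_step uP P0 path)) => r /andP [rP Wr] rmin.
have grow k : k \in P -> k < r -> exists a, teq (W k) (a :: prev_word P W k).
  move=> kP kr; apply: tadj_grow (path.1 k kP) _; rewrite leqNgt; apply/negP => shrink.
  by have := rmin k; rewrite kP shrink => /(_ isT); rewrite leqNgt kr.
have [v] := tadj_shrink (path.1 r rP) Wr.
case: (prev_wordP P W r) => [_ /teq_size //|q qP qr qmax Wq].
have [s [sP sq Ws between]] :=
  find_opener qP (fun k kP kq => grow k kP (leq_ltn_trans kq qr)) Wq.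
have size_rm : size (pos_rm P s r) = n.*2.
  by move: (perm_size (perm_pos_rm uP sP rP sq qr)); rewrite szP doubleS => -[].
have [sg sg_ok] := IH _ _ (filter_uniq _ uP) size_rm
  (trace_path_rm sP rP qP sq qr qmax Wq Ws between path).
exists (((s, r), v) :: sg).
exact: (realizes_cons uP sP rP qP sq qr qmax grow Wq Ws between Wr sg_ok).
Qed.

Lemma in_P_trace_path p w : 0 < p -> in_P G p w ->
  trace_path (iota 1 p.*2) (fun k => nth [::] w k.-1).
Proof.
move=> p_gt0 [size_w [adj last_nil]].
set W := fun k => _; set P := iota 1 p.*2.
have prev_iota k : k <= p.*2 -> prev_word P W k.+1 = nth [::] ([::] :: w) k.
  case: k => [_|k kp]; first by apply: prev_word_none => j; rewrite mem_iota => /andP [].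
  by rewrite (@prev_word_max _ _ _ k.+1) // mem_iota /= add1n ltnS.
split.
  move=> k; rewrite mem_iota add1n ltnS; case: k => // k /= kp.
  by rewrite prev_iota ?(ltnW kp) //; exact: adj.
move=> m below_m; have p2 : p.*2 \in P.
  by rewrite mem_iota add1n ltnSn andbT -addnn; case: (p) p_gt0.
rewrite (@prev_word_max _ _ _ p.*2) ?below_m //; last first.
  by move=> j; rewrite mem_iota add1n ltnS => /andP [_ ->].
by rewrite /W -size_w nth_last.
Qed.

End PhiInverse.

Theorem lemma3p4 (L : nat) (G : rel 'I_L) (Gsym : symmetric G)
    (Gloopless : irreflexive G) (p : nat) (hp : 1 <= p) (w : seq (word L)) :
  in_P G p w ->
  exists bl : seq (block L),
    in_Pi G p bl /\
    (forall k, k < p.*2 -> traceeq G (nth [::] (Phi p bl) k) (nth [::] w k)).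
Proof.
move=> wP; have path := in_P_trace_path hp wP.
have [bl [size_bl ordered bpos_bl cross PhiF_bl _ _]] :=
  realizes_exists Gsym Gloopless (iota_uniq 1 p.*2) (size_iota 1 p.*2) path.
exists bl; split=> // k kp.
rewrite /Phi (nth_map 0) ?size_iota // nth_iota // size_bl add1n.
by apply: PhiF_bl; rewrite mem_iota /= add1n ltnS.
Qed.
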